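(* Let $n=2p+1$ agents choose between two options $A=\{a,b\}$, each agent having a strict preference over $A$, and let preferences over lotteries be given by stochastic dominance. Then the Bloc formation mechanism $\chi_{BF}$ Nash implements the majority rule: for every preference profile $R$, every Nash equilibrium $m$ of $\chi_{BF}$ at $R$ satisfies $\chi_{BF}(m)=Maj(R)$ (the degenerate lottery on $Maj(R)$), and there exists a Nash equilibrium $m$ at $R$ with $\chi_{BF}(m)=Maj(R)$.
   Context: Agents: $I=\{1,\dots,n\}$ with $n=2p+1$, $p\ge 1$. Options $A=\{a,b\}$. A preference profile $R=(R_1,\dots,R_n)$ assigns to each agent a strict preference over $A$. The majority rule is $Maj(R)=a$ if $|\{i: a\,R_i\,b\}|\ge p+1$ and $Maj(R)=b$ otherwise. $\Delta$ is the set of lotteries over $A$. Stochastic dominance (SD): agent $i$ whose preferred option is $x$ weakly prefers lottery $\beta$ to $\eta$ iff $\beta(x)\ge\eta(x)$, and strictly prefers iff $\beta(x)>\eta(x)$. A mechanism $g:\prod_i M_i\to\Delta$ Nash implements a social choice function $f$ if for every $R$ every Nash equilibrium (with respect to SD preferences) has outcome $f(R)$ and some Nash equilibrium has outcome $f(R)$. Bloc formation mechanism: each agent's message is $m_i=(v_i,c_i)$, where $v_i\in A$ is a vote and $c_i$ is a set of exactly $p$ agents not containing $i$ (her nominations). For $x\in A$, a set $B\subseteq I$ with $|B|\ge p+1$ is a bloc in favor of $x$ in $m$ if $v_i=x$ and $c_i\subseteq B$ for all $i\in B$. (All blocs in a profile favor the same option.) If $m$ admits a bloc in favor of $x$, then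 $\chi_{BF}(m)=x$. Otherwise $\chi_{BF}(m)=\eta(m)$, the lottery with $\eta^x(m)=\sum_{i\in I}\eta_i(m)\mathbf{1}\{v_i=x\}$, where $\eta_i(m)=|\{j\in I\setminus\{i\}: i\in c_j\}|/(np)$. *)

From HB Require Import structures.
From mathcomp Require Import all_boot all_order all_algebra.
Set Implicit Arguments. Unset Strict Implicit. Unset Printing Implicit Defensive.
Import Order.TTheory GRing.Theory Num.Theory.
Local Open Scope ring_scope.

Inductive option2 := opt_a | opt_b.
Definition option2_eqb (x y : option2) : bool :=
  match x, y with opt_a, opt_a | opt_b, opt_b => true | _, _ => false end.
Lemma option2_eqP : Equality.axiom option2_eqb.
Proof. by case; case; constructor. Qed.
HB.instance Definition _ := hasDecEq.Build option2 option2_eqP.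
Definition option2_to_bool (x : option2) : bool := if x is opt_a then true else false.
Definition bool_to_option2 (b : bool) : option2 := if b then opt_a else opt_b.
Lemma option2_boolK : cancel option2_to_bool bool_to_option2.
Proof. by case. Qed.
HB.instance Definition _ := Countable.copy option2 (can_type option2_boolK).
HB.instance Definition _ := Finite.copy option2 (can_type option2_boolK).

Section BF.
Variable p : nat.
Definition nagents : nat := p.*2.+1.
Definition agent := 'I_nagents.

(* A strict preference over A = {a,b} is identified with its top option. *)
Definition pref := option2.
Definition profile := agent -> pref.

Definition lottery := option2 -> rat.
Definition degenerate (x : option2) : lottery := fun y => (y == x)%:R.

Definition sd_weak (x : pref) (beta eta : lottery) : bool := eta x <= beta x.
Definition sd_strict (x : pref) (beta eta : lottery) : bool := eta x < beta x.

Definition Maj (R : profile) : option2 :=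
  if (p.+1 <= #|[set i | R i == opt_a]|)%N then opt_a else opt_b.

(* Messages: vote and set of nominations. *)
Definition message := (option2 * {set agent})%type.
Definition valid_message (i : agent) (mi : message) : bool :=
  (#|mi.2| == p) && (i \notin mi.2).
Definition mprofile := agent -> message.
Definition valid_mprofile (m : mprofile) : bool :=
  [forall i, valid_message i (m i)].

Definition is_bloc (m : mprofile) (x : option2) (B : {set agent}) : bool :=
  (p.+1 <= #|B|)%N && [forall i in B, ((m i).1 == x) && ((m i).2 \subset B)].
Definition has_bloc (m : mprofile) (x : option2) : bool :=
  [exists B : {set agent}, is_bloc m x B].

Definition eta_i (m : mprofile) (i : agent) : rat :=
  #|[set j | (j != i) && (i \in (m j).2)]|%:R / (nagents * p)%:R.
Definition eta_lot (m : mprofile) : lottery :=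
  fun x => \sum_(i : agent) eta_i m i * ((m i).1 == x)%:R.

Definition chi_BF (m : mprofile) : lottery :=
  if has_bloc m opt_a then degenerate opt_a
  else if has_bloc m opt_b then degenerate opt_b
  else eta_lot m.

Definition deviate (m : mprofile) (i : agent) (mi : message) : mprofile :=
  fun j => if j == i then mi else m j.

Definition nash_eq (R : profile) (m : mprofile) : Prop :=
  valid_mprofile m /\
  forall (i : agent) (mi : message), valid_message i mi ->
    ~~ sd_strict (R i) (chi_BF (deviate m i mi)) (chi_BF m).

Definition nash_implements (f : profile -> option2) : Prop :=
  forall R : profile,
    (forall m, nash_eq R m -> chi_BF m = degenerate (f R)) /\
    (exists m, nash_eq R m /\ chi_BF m = degenerate (f R)).
End BF.

From mathcomp Require Import all_boot all_order all_algebra.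
From mathcomp Require Import zify.
Set Implicit Arguments. Unset Strict Implicit. Unset Printing Implicit Defensive.
Import Order.TTheory GRing.Theory Num.Theory.

(** Without a bloc the outcome is the lottery [eta_lot], whose weight on [x]
    counts the nominations received by [x]-voters; an agent gains by voting for
    her top option and by nominating allies instead of opponents. So in such an
    equilibrium nominated agents vote sincerely, and an agent who nominates an
    opponent nominates every ally, which leaves at most [p] voters on each side:
    impossible with [2p+1] agents. If an [x]-bloc exists, [x]-blocs are closed
    under intersection; a supporter of [Maj R] in the least one is nominated
    inside it, and by switching her vote she breaks every [x]-bloc while giving
    [Maj R] positive weight, so [x = Maj R]. Conversely, if everybody votes
    [Maj R] and nominates only its supporters, these supporters form a bloc that
    no outsider can break. *)

Definition other (x : option2) : option2 := if x is opt_a then opt_b else opt_a.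

Lemma otherK : involutive other. Proof. by case. Qed.
Lemma eq_other x : (x == other x) = false. Proof. by case: x. Qed.
Lemma other_eq x : (other x == x) = false. Proof. by case: x. Qed.
Lemma neq_other x y : x != y -> y = other x. Proof. by case: x; case: y. Qed.

Lemma card_vote_classes (T : finType) (v : T -> option2) x :
  #|[set i | v i == x]| + #|[set i | v i == other x]| = #|T|.
Proof.
rewrite -(cardsC [set i | v i == x]); congr (_ + _); apply: eq_card => i.
by rewrite !inE; case: (v i); case: x.
Qed.

Lemma subset_of_card (T : finType) (A : {set T}) k :
  k <= #|A| -> exists2 B : {set T}, B \subset A & #|B| = k.
Proof.
elim: k => [|k IH] hk; first by exists set0; rewrite ?sub0set ?cards0.
have [B sBA cardB] := IH (ltnW hk).
have /properP[_ [a aA aB]] : B \proper A by rewrite properEcard sBA cardB.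
by exists (a |: B); rewrite ?subUset ?sub1set ?aA ?sBA // cardsU1 aB cardB.
Qed.

Lemma card_pairs (I J : finType) (A : {set I * J}) :
  #|A| = \sum_(i : I) \sum_(j : J) ((i, j) \in A).
Proof. by rewrite -sum1_card big_mkcond /= pair_bigA; apply: eq_bigr => -[]. Qed.

Section Mechanism.
Variable p : nat.
Local Notation agent := (agent p).
Local Notation mprofile := (mprofile p).

Lemma card_agent : #|agent| = p.*2.+1. Proof. by rewrite card_ord. Qed.

Lemma majority_meet (A B : {set agent}) : p < #|A| -> p < #|B| -> A :&: B != set0.
Proof.
rewrite -card_gt0; have := cardsUI A B; have := max_card (A :|: B).
rewrite card_agent; lia.
Qed.

Lemma card_Maj (R : profile p) : p < #|[set i | R i == Maj R]|.
Proof.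
rewrite /Maj; case: ifP => // /negbT.
have := card_vote_classes R opt_a; rewrite card_agent /=; lia.
Qed.

Lemma valid_mprofile_at (m : mprofile) i :
  valid_mprofile m -> #|(m i).2| = p /\ i \notin (m i).2.
Proof. by move/forallP/(_ i)/andP => [/eqP -> ->]. Qed.

Lemma bloc_card (m : mprofile) x B : is_bloc m x B -> p < #|B|.
Proof. by case/andP. Qed.

Lemma bloc_closed (m : mprofile) x B :
  is_bloc m x B -> {in B, forall i, ((m i).1 == x) && ((m i).2 \subset B)}.
Proof. by move=> /andP[_ /forallP hB] i; apply/implyP/hB. Qed.

Lemma closed_is_bloc (m : mprofile) x (C : {set agent}) :
  valid_mprofile m -> C != set0 ->
  {in C, forall i, ((m i).1 == x) && ((m i).2 \subset C)} -> is_bloc m x C.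
Proof.
move=> mv /set0Pn[i iC] hC; apply/andP; split; last first.
  by apply/forallP => j; apply/implyP/hC.
have [cardc ic] := valid_mprofile_at i mv.
have : (m i).2 \subset C :\ i.
  apply/subsetP => k kc; rewrite !inE (subsetP (andP (hC i iC)).2) // andbT.
  by apply: contraTneq kc => ->.
by move/subset_leq_card; rewrite cardc (cardsD1 i C) iC.
Qed.

Lemma bloc_vote_unique (m : mprofile) x y B1 B2 :
  is_bloc m x B1 -> is_bloc m y B2 -> x = y.
Proof.
move=> h1 h2; have /set0Pn[i] := majority_meet (bloc_card h1) (bloc_card h2).
rewrite inE => /andP[i1 i2].
by have /andP[/eqP <- _] := bloc_closed h1 i1; have /andP[/eqP <- _] := bloc_closed h2 i2.
Qed.

Lemma has_bloc_unique (m : mprofile) x y : has_bloc m x -> has_bloc m y -> x = y.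
Proof. by move=> /existsP[B1 h1] /existsP[B2 h2]; apply: bloc_vote_unique h1 h2. Qed.

Lemma blocI (m : mprofile) x B1 B2 : valid_mprofile m ->
  is_bloc m x B1 -> is_bloc m x B2 -> is_bloc m x (B1 :&: B2).
Proof.
move=> mv h1 h2; apply: (closed_is_bloc mv) => [|i].
  exact: majority_meet (bloc_card h1) (bloc_card h2).
rewrite inE => /andP[i1 i2].
have /andP[-> s1] := bloc_closed h1 i1; have /andP[_ s2] := bloc_closed h2 i2.
by rewrite subsetI s1 s2.
Qed.

Lemma least_bloc (m : mprofile) x : valid_mprofile m -> has_bloc m x ->
  exists2 M, is_bloc m x M & forall B, is_bloc m x B -> M \subset B.
Proof.
move=> mv /existsP[B0 hB0].
case: (arg_minnP (fun B : {set agent} => #|B|) hB0) => M hM Mmin.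
exists M => // B hB; apply/setIidPl/eqP.
by rewrite eqEcard subsetIl Mmin // blocI.
Qed.

Lemma chi_BF_bloc (m : mprofile) x : has_bloc m x -> chi_BF m = degenerate x.
Proof.
rewrite /chi_BF; case: x => [-> //|hb].
by case: ifP => [/has_bloc_unique/(_ hb) //|_]; rewrite hb.
Qed.

Lemma chi_BF_no_bloc_other (m : mprofile) y : ~~ has_bloc m (other y) ->
  chi_BF m y = if has_bloc m y then 1%R else eta_lot m y.
Proof. by rewrite /chi_BF; case: y => /= /negbTE ->; case: has_bloc. Qed.

Definition nominations (m : mprofile) x : {set agent * agent} :=
  [set jk | [&& jk.1 != jk.2, jk.2 \in (m jk.1).2 & (m jk.2).1 == x]].

Lemma np_gt0 : 0 < p -> 0 < nagents p * p.
Proof. by rewrite muln_gt0. Qed.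

Lemma eta_lotE (m : mprofile) x :
  eta_lot m x = (#|nominations m x|%:R / (nagents p * p)%:R)%R.
Proof.
rewrite card_pairs exchange_big natr_sum mulr_suml; apply: eq_bigr => k _.
rewrite /eta_i mulrAC -natrM -sum1_card big_mkcond big_distrl /=.
congr (_%:R / _)%R; apply: eq_bigr => j _.
by rewrite !inE; case: (_ != _); case: (_ \in _); case: (_ == _).
Qed.

Lemma card_nominations_le (m : mprofile) x : valid_mprofile m ->
  #|nominations m x| + #|nominations m (other x)| <= nagents p * p.
Proof.
move=> mv; rewrite !card_pairs -big_split /=.
have -> : nagents p * p = \sum_(j : agent) p by rewrite sum_nat_const card_ord.
apply: leq_sum => j _.
have [cardc _] := valid_mprofile_at j mv.
rewrite -{}[X in _ <= X]cardc -big_split -sum1_card [X in _ <= X]big_mkcond /=.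
apply: leq_sum => k _.
by rewrite !inE; case: (_ != _); case: (_ \in _); case: (m k).1; case: x.
Qed.

Section Lotteries.
Hypothesis p_gt0 : 0 < p.
Variable m : mprofile.

Lemma eta_lot_lt1 x : valid_mprofile m ->
  nominations m (other x) != set0 -> (eta_lot m x < 1)%R.
Proof.
move=> mv; rewrite -card_gt0 eta_lotE ltr_pdivrMr ?ltr0n ?np_gt0 // mul1r ltr_nat.
by have := card_nominations_le x mv; lia.
Qed.

Lemma chi_BF_le1 x : valid_mprofile m -> (chi_BF m x <= 1)%R.
Proof.
move=> mv; rewrite /chi_BF /degenerate.
case: ifP => _; first by case: (_ == _); rewrite ?ler01.
case: ifP => _; first by case: (_ == _); rewrite ?ler01.
rewrite eta_lotE ler_pdivrMr ?ltr0n ?np_gt0 // mul1r ler_nat.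
by have := card_nominations_le x mv; lia.
Qed.

Lemma eta_lot_gt0 x : nominations m x != set0 -> (0 < eta_lot m x)%R.
Proof. by rewrite -card_gt0 eta_lotE => ?; rewrite divr_gt0 ?ltr0n ?np_gt0. Qed.

Lemma eta_lot_lt (m' : mprofile) x :
  nominations m x \proper nominations m' x -> (eta_lot m x < eta_lot m' x)%R.
Proof.
by move/proper_card; rewrite !eta_lotE ltr_pM2r ?invr_gt0 ?ltr0n ?np_gt0 // ltr_nat.
Qed.

End Lotteries.

Lemma deviate_self (m : mprofile) i mi : deviate m i mi i = mi.
Proof. by rewrite /deviate eqxx. Qed.

Lemma deviate_other (m : mprofile) i mi j : j != i -> deviate m i mi j = m j.
Proof. by rewrite /deviate => /negbTE ->. Qed.

Lemma valid_deviate (m : mprofile) i mi :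
  valid_mprofile m -> valid_message i mi -> valid_mprofile (deviate m i mi).
Proof.
move=> /forallP mv hmi; apply/forallP => j; rewrite /deviate.
by case: eqVneq => [->|].
Qed.

Lemma bloc_deviate (m : mprofile) i mi y (B : {set agent}) :
  i \notin B -> is_bloc (deviate m i mi) y B = is_bloc m y B.
Proof.
move=> iB; congr (_ && _); apply: eq_forallb => j.
case: (boolP (j \in B)) => //= jB.
by rewrite deviate_other //; apply: contraNneq iB => <-.
Qed.

Lemma bloc_deviate_notin (m : mprofile) i mi y (B : {set agent}) :
  mi.1 != y -> is_bloc (deviate m i mi) y B -> i \notin B.
Proof.
move=> miy hB; apply/negP => /(bloc_closed hB)/andP[].
by rewrite deviate_self (negbTE miy).
Qed.

Lemma has_bloc_deviate (m : mprofile) i mi y :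
  mi.1 != y -> has_bloc (deviate m i mi) y -> has_bloc m y.
Proof.
move=> miy /existsP[B hB]; apply/existsP; exists B.
by rewrite -(bloc_deviate m mi y (bloc_deviate_notin miy hB)).
Qed.

Lemma nominations_deviate (m : mprofile) i (c : {set agent}) x :
  (forall k, k != i -> k \in (m i).2 -> (m k).1 = x -> k \in c) ->
  nominations m x \subset nominations (deviate m i (x, c)) x.
Proof.
move=> hc; apply/subsetP => -[j k]; rewrite !inE /= => /and3P[jk kj /eqP vk].
rewrite jk /=; apply/andP; split.
  case: (eqVneq j i) => [ji|]; last by move/deviate_other ->.
  by rewrite ji deviate_self hc // -?ji // eq_sym.
by case: (eqVneq k i) => [->|/deviate_other ->]; rewrite ?deviate_self ?vk /= ?eqxx.
Qed.

Lemma nash_eq_le (R : profile p) (m : mprofile) i mi : nash_eq R m ->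
  valid_message i mi -> (chi_BF (deviate m i mi) (R i) <= chi_BF m (R i))%R.
Proof. by case=> _ h /h; rewrite /sd_strict -leNgt. Qed.

Section NoBlocEquilibrium.
Variables (R : profile p) (m : mprofile).
Hypotheses (p_gt0 : 0 < p) (m_ne : nash_eq R m).
Hypothesis m_no_bloc : forall x, ~~ has_bloc m x.

Let m_valid : valid_mprofile m := m_ne.1.

Lemma no_improving_deviation i c :
  valid_message i (R i, c) -> nominations m (other (R i)) != set0 ->
  nominations m (R i) \proper nominations (deviate m i (R i, c)) (R i) -> False.
Proof.
move=> hv nom_other lt.
(* The deviation creates no bloc against [R i], so [R i] gets weight 1 or a
   larger [eta_lot]. *)
have := nash_eq_le m_ne hv; apply/negP; rewrite -ltNge.
have no_other : ~~ has_bloc (deviate m i (R i, c)) (other (R i)).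
  by apply: contra (m_no_bloc _); apply: has_bloc_deviate; rewrite /= eq_other.
rewrite (chi_BF_no_bloc_other no_other) (chi_BF_no_bloc_other (m_no_bloc _)).
rewrite (negbTE (m_no_bloc _)); case: has_bloc; first exact: eta_lot_lt1.
exact: eta_lot_lt.
Qed.

Lemma nominee_votes_pref l i : l != i -> i \in (m l).2 -> (m i).1 = R i.
Proof.
move=> li il; apply/eqP/negPn/negP => vi.
have [cardc ic] := valid_mprofile_at i m_valid.
have vi_other : (m i).1 = other (R i) by apply: neq_other; rewrite eq_sym.
apply: (@no_improving_deviation i (m i).2).
- by rewrite /valid_message cardc eqxx.
- by apply/set0Pn; exists (l, i); rewrite inE li il vi_other eqxx.
rewrite properE nominations_deviate => [|k _ ki _] //=; apply/subsetPn; exists (l, i).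
  by rewrite inE /= li deviate_other // il deviate_self eqxx.
by rewrite inE /= vi_other other_eq !andbF.
Qed.

Lemma opponent_nominator_nominates_allies i k j : k \in (m i).2 -> (m k).1 != R i ->
  j != i -> (m j).1 = R i -> j \in (m i).2.
Proof.
move=> ki vk ji vj; apply/negPn/negP => ij.
have [cardc ic] := valid_mprofile_at i m_valid.
have ik : i != k by apply: contraTneq ki => <-.
have vk_other : (m k).1 = other (R i) by apply: neq_other; rewrite eq_sym.
apply: (@no_improving_deviation i (j |: (m i).2 :\ k)).
- rewrite /valid_message cardsU1 !inE negb_or (negbTE ij) (negbTE ic) andbF.
  rewrite (eq_sym i j) ji andbF andbT; apply/eqP.
  by rewrite -[RHS]cardc [RHS](cardsD1 k) ki.
- apply/set0Pn; exists (i, k); rewrite inE /= ik ki.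
  by rewrite vk_other eqxx.
rewrite properE nominations_deviate => [|k' _ k'i vk']; last first.
  rewrite !inE k'i andbT; apply/orP; right; apply/eqP => k'k.
  by move/eqP: vk'; rewrite k'k vk_other other_eq.
apply/subsetPn; exists (i, j); last by rewrite inE /= (negbTE ij) andbF.
by rewrite inE /= eq_sym ji deviate_self deviate_other // vj !inE !eqxx.
Qed.

Lemma opposed_nomination z : nominations m z != set0 ->
  exists i k, [/\ R i = z, (m i).1 = z, k \in (m i).2 & (m k).1 = other z].
Proof.
(* The nominated [z]-voters form no bloc, so one of them nominates an agent
   outside; being nominated, that agent votes [other z]. *)
pose A := [set k | ((m k).1 == z) && [exists j, (j != k) && (k \in (m j).2)]].
move=> /set0Pn[[j0 k0]]; rewrite inE /= => /and3P[jk kj vk].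
have /forallPn[i] : ~~ [forall i in A, (m i).2 \subset A].
  apply: contra (m_no_bloc z) => /forallP closed; apply/existsP; exists A.
  apply: closed_is_bloc => [||i iA]; first exact: m_valid.
    by apply/set0Pn; exists k0; rewrite inE vk; apply/existsP; exists j0; rewrite jk.
  by rewrite (implyP (closed i) iA) andbT; move: iA; rewrite inE => /andP[].
rewrite negb_imply inE => /andP[/andP[/eqP vi /existsP[l /andP[li il]]]].
move=> /subsetPn[k ki kA]; exists i, k; split => //.
  by rewrite -(nominee_votes_pref li il).
apply: neq_other; apply: contraNneq kA => vk'; rewrite inE -vk' eqxx /=.
apply/existsP; exists i; rewrite ki andbT; have [_ ic] := valid_mprofile_at i m_valid.
by apply: contraTneq ki => <-.
Qed.

Lemma vote_class_small z : nominations m z != set0 ->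
  #|[set k | (m k).1 == z]| <= p /\ nominations m (other z) != set0.
Proof.
move=> /opposed_nomination[i [k [Ri vi ki vk]]].
have [cardc ic] := valid_mprofile_at i m_valid.
have ik : i != k by apply: contraTneq ki => <-.
split; last by apply/set0Pn; exists (i, k); rewrite inE ik ki vk eqxx.
(* Among her [p] nominees, [i] has [k] and every other [z]-voter. *)
have : [set j | (m j).1 == z] :\ i \subset (m i).2 :\ k.
  apply/subsetP => j; rewrite !inE => /andP[ji /eqP vj].
  rewrite (opponent_nominator_nominates_allies ki) ?vk ?Ri ?other_eq ?andbT //.
  by apply/eqP => jk; move/eqP: vj; rewrite jk vk other_eq.
move/subset_leq_card; move: cardc.
rewrite (cardsD1 i [set j | _]) (cardsD1 k (m i).2) inE vi eqxx ki /=.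
by move=> cardc le; rewrite -[X in _ <= X]cardc leq_add2l.
Qed.

Lemma no_bloc_absurd : False.
Proof.
pose i0 : agent := ord0.
have [cardc ic] := valid_mprofile_at i0 m_valid.
have /set0Pn[k ki0] : (m i0).2 != set0 by rewrite -card_gt0 cardc.
have nom : nominations m (m k).1 != set0.
  apply/set0Pn; exists (i0, k); rewrite inE /= ki0 eqxx !andbT.
  by apply: contraTneq ki0 => <-.
have [small1 /vote_class_small[small2 _]] := vote_class_small nom.
have := card_vote_classes (fun j => (m j).1) (m k).1; rewrite card_agent; lia.
Qed.

End NoBlocEquilibrium.

Lemma nash_eq_has_bloc (R : profile p) m : 0 < p -> nash_eq R m ->
  exists x, has_bloc m x.
Proof.
move=> p_gt0 m_ne; case: (boolP (has_bloc m opt_a)) => [|na]; first by exists opt_a.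
case: (boolP (has_bloc m opt_b)) => [|nb]; first by exists opt_b.
by case: (no_bloc_absurd p_gt0 m_ne) => -[].
Qed.

Lemma least_bloc_nominated (m : mprofile) x M j : 0 < p -> valid_mprofile m ->
  is_bloc m x M -> (forall B, is_bloc m x B -> M \subset B) -> j \in M ->
  exists2 l, l != j & j \in (m l).2.
Proof.
move=> p_gt0 mv hM Mleast jM.
case: (boolP [exists l, (l != j) && (j \in (m l).2)]).
  by move=> /existsP[l /andP[]]; exists l.
(* Otherwise [M :\ j] would be a smaller bloc. *)
move/existsPn => unnominated.
suff /subsetP/(_ j jM) : M \subset M :\ j by rewrite !inE eqxx.
apply/Mleast/(closed_is_bloc mv) => [|l].
  by rewrite -card_gt0; have := bloc_card hM; rewrite (cardsD1 j M) jM; lia.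
rewrite !inE => /andP[lj lM]; have /andP[-> cl] := bloc_closed hM lM.
apply/subsetP => k kl; rewrite !inE (subsetP cl) // andbT.
by apply: contraTneq kl => ->; have := unnominated l; rewrite lj.
Qed.

Lemma nash_eq_bloc_Maj (R : profile p) m x :
  0 < p -> nash_eq R m -> has_bloc m x -> x = Maj R.
Proof.
move=> p_gt0 m_ne hx; have mv := m_ne.1.
apply/eqP/negPn/negP => /neq_other Maj_other.
have [M hM Mleast] := least_bloc mv hx.
have /set0Pn[j] := majority_meet (bloc_card hM) (card_Maj R).
rewrite !inE => /andP[jM /eqP Rj].
have [l lj jl] := least_bloc_nominated p_gt0 mv hM Mleast jM.
have [cardc jc] := valid_mprofile_at j mv.
have hv : valid_message j (Maj R, (m j).2) by rewrite /valid_message cardc eqxx.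
have := nash_eq_le m_ne hv; apply/negP; rewrite -ltNge Rj.
set m' := deviate m j _.
have no_x : ~~ has_bloc m' x.
  apply/existsP => -[B hB].
  have jB : j \notin B by apply: bloc_deviate_notin hB; rewrite /= Maj_other other_eq.
  by rewrite bloc_deviate // in hB; rewrite (subsetP (Mleast B hB)) in jB.
rewrite (chi_BF_bloc hx) /degenerate Maj_other other_eq.
rewrite (chi_BF_no_bloc_other (y := other x)) ?otherK //.
case: has_bloc; first exact: ltr01.
apply: eta_lot_gt0 => //; apply/set0Pn; exists (l, j).
by rewrite /m' inE /= lj deviate_other // jl deviate_self Maj_other eqxx.
Qed.

Lemma nash_eq_exists (R : profile p) : 0 < p ->
  exists m, nash_eq R m /\ chi_BF m = degenerate (Maj R).
Proof.
move=> p_gt0; set x := Maj R; pose S := [set i | R i == x].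
have S_gt : p < #|S| := card_Maj R.
have cardSD i : p <= #|S :\ i|.
  by move: S_gt; rewrite (cardsD1 i S); case: (i \in S) => /=; lia.
have [c cS cardc] := fin_all_exists2 (fun i => subset_of_card (cardSD i)).
pose m0 : mprofile := fun i => (x, c i).
have m0_valid : valid_mprofile m0.
  apply/forallP => i; rewrite /valid_message /= cardc eqxx /=.
  by apply/negP => /(subsetP (cS i)); rewrite !inE eqxx.
have S_bloc m : {in S, m =1 m0} -> is_bloc m x S.
  move=> mS; apply/andP; split => //; apply/forallP => i; apply/implyP => iS.
  by rewrite mS //= eqxx (subset_trans (cS i)) // subD1set.
have chi_m0 : chi_BF m0 = degenerate x.
  by apply: chi_BF_bloc; apply/existsP; exists S; apply: S_bloc.
exists m0; split => //; split => // i mi hmi; rewrite /sd_strict chi_m0 -leNgt.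
have [Ri | Ri] := eqVneq (R i) x.
  by rewrite Ri /degenerate eqxx chi_BF_le1 // valid_deviate.
rewrite (@chi_BF_bloc _ x) //; apply/existsP; exists S.
by rewrite bloc_deviate ?inE //; apply: S_bloc.
Qed.

End Mechanism.

Theorem proposition1 (p : nat) (hp : (1 <= p)%N) : @nash_implements p (@Maj p).
Proof.
move=> R; split; last exact: nash_eq_exists R hp.
move=> m m_ne; have [x hx] := nash_eq_has_bloc hp m_ne.
by rewrite (chi_BF_bloc hx) (nash_eq_bloc_Maj hp m_ne hx).
Qed.
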